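(* Let $G=(V,E)$ be a finite directed acyclic graph, $G'=(V,E')$ its minimum equivalent graph, $S$ a set of streams, and $f:V\to S$ a stream assignment. A synchronization plan $\Lambda\subseteq E$ is safe for $f$ on $G$ if and only if $\Lambda$ is safe for $f$ on $G'$.
   Context: A path from $u$ to $v$ in a directed graph is a nonempty sequence of edges $(u,w_1),\dots,(w_k,v)$ of that graph. The minimum equivalent graph (MEG) of a finite DAG $G=(V,E)$ is the subgraph $G'=(V,E')$, $E'\subseteq E$, with the same vertex set and the smallest number of edges among subgraphs having the same reachability relation as $G$. A stream assignment is any function $f:V\to S$. A synchronization plan is a set $\Lambda$ of edges. For a directed graph $H=(V,E_H)$ and a stream assignment $f$, a synchronization plan $\Lambda$ is safe for $f$ on $H$ if for every edge $(u,v)\in E_H$, either $f(u)=f(v)$, or there exists a path $P\subseteq E_H$ from $u$ to $v$ in $H$ with $P\cap\Lambda\neq\emptyset$. *)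

From mathcomp Require Import all_boot.
Set Implicit Arguments. Unset Strict Implicit. Unset Printing Implicit Defensive.

(* A path from u to v in E: a nonempty sequence of edges
   (u,w_1),(w_1,w_2),...,(w_k,v) of E, encoded by the list of vertices
   p = [:: w_1; ...; w_k; v] visited after u. *)
Definition is_path (V : finType) (E : {set V * V}) (u v : V) (p : seq V) : bool :=
  [&& p != [::], path (fun a b => (a, b) \in E) u p & last u p == v].

Definition path_edges (V : Type) (u : V) (p : seq V) : seq (V * V) :=
  zip (u :: p) p.

Definition reach (V : finType) (E : {set V * V}) (u v : V) : Prop :=
  exists p, is_path E u v p.

Definition acyclic (V : finType) (E : {set V * V}) : Prop :=
  forall u, ~ reach E u u.

Definition same_reach (V : finType) (E1 E2 : {set V * V}) : Prop :=
  forall u v, reach E1 u v <-> reach E2 u v.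

Definition is_MEG (V : finType) (E E' : {set V * V}) : Prop :=
  [/\ E' \subset E, same_reach E' E &
      forall E'' : {set V * V}, E'' \subset E -> same_reach E'' E -> #|E'| <= #|E''| ].

Definition safe (V : finType) (S : Type) (EH : {set V * V}) (f : V -> S)
    (Lambda : {set V * V}) : Prop :=
  forall u v, (u, v) \in EH ->
    f u = f v \/ exists p, is_path EH u v p /\ has (fun e => e \in Lambda) (path_edges u p).

From mathcomp Require Import all_boot.
Set Implicit Arguments. Unset Strict Implicit. Unset Printing Implicit Defensive.

(* The structural fact behind this is that in a DAG every edge (u,v) kept
   in the MEG is the ONLY path from u to v: a detour u -> w ~> v with
   w <> v would make (u,v) redundant (every path using it could be
   rerouted through the detour, acyclicity guaranteeing the detour itself
   never uses (u,v)), contradicting minimality of E'.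

   - safe on E  =>  safe on E' : for an MEG edge (u,v), the marked path
     supplied by safety on E can only be the edge (u,v) itself, which is
     also a path in E'.
   - safe on E' =>  safe on E : an edge (u,v) of E is realised by an
     E'-path; "u and v agree on their stream or are joined by a marked
     path" is transitive along connected vertices, so it propagates along
     that E'-path, and marked E'-paths are marked E-paths. *)

Section Reachability.
Variable V : finType.
Implicit Types (E F : {set V * V}) (x y z : V) (p q : seq V).

Definition edge_rel E : rel V := fun a b => (a, b) \in E.

Lemma is_path_subset E F x y p : E \subset F -> is_path E x y p -> is_path F x y p.
Proof.
move=> /subsetP sEF /and3P [p_nil p_path p_last].
by rewrite /is_path p_nil p_last andbT; apply: sub_path p_path => a b /sEF.
Qed.

Lemma reach_subset E F x y : E \subset F -> reach E x y -> reach F x y.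
Proof. by move=> sEF [p Hp]; exists p; apply: is_path_subset Hp. Qed.

Lemma reach_connect E x y :
  reach E x y <-> exists2 z, (x, z) \in E & connect (edge_rel E) z y.
Proof.
split.
- case=> [[|z p]]; first by case/and3P.
  case/and3P=> _ /= /andP [Hxz Hp] /eqP <-.
  by exists z => //; apply/connectP; exists p.
- case=> z Hxz /connectP [p Hp ->]; exists (z :: p).
  by rewrite /is_path /= Hxz Hp eqxx.
Qed.

Lemma connect_reach E x y : connect (edge_rel E) x y <-> x = y \/ reach E x y.
Proof.
split.
- move=> /connectP [[|z p] Hp ->]; first by left.
  by right; exists (z :: p); rewrite /is_path Hp eqxx.
- case=> [->|[p /and3P [_ Hp /eqP <-]]]; first exact: connect0.
  by apply/connectP; exists p.
Qed.

Lemma reach_edge E x y : (x, y) \in E -> reach E x y.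
Proof. by move=> Hxy; apply/reach_connect; exists y => //; apply: connect0. Qed.

Lemma reach_connect_trans E x y z :
  reach E x y -> connect (edge_rel E) y z -> reach E x z.
Proof.
move=> /reach_connect [w Hxw Hwy] Hyz; apply/reach_connect.
by exists w => //; apply: connect_trans Hwy Hyz.
Qed.

Lemma same_reach_connect E F x y :
  same_reach E F -> connect (edge_rel E) x y -> connect (edge_rel F) x y.
Proof.
move=> srEF /connect_reach [->|Hxy]; first exact: connect0.
by apply/connect_reach; right; apply/srEF.
Qed.

Lemma path_edges_cat x p q :
  path_edges x (p ++ q) = path_edges x p ++ path_edges (last x p) q.
Proof. by elim: p x => [|a p IH] x //=; rewrite /path_edges /= -IH. Qed.

End Reachability.

Section MinimumEquivalentGraph.
Variable V : finType.
Implicit Types (E F : {set V * V}) (a b u v w x y : V) (p : seq V).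

Lemma path_avoid F (e : V * V) x p :
  path (edge_rel F) x p -> e \notin path_edges x p ->
  path (edge_rel (F :\ e)) x p.
Proof.
elim: p x => [|y p IH] x //= /andP [Hxy Hp].
rewrite /path_edges /= in_cons negb_or => /andP [ne_xy /IH ->] //.
by rewrite /edge_rel in_setD1 eq_sym ne_xy andbT.
Qed.

Lemma path_through_edge F a b x p :
  path (edge_rel F) x p -> (a, b) \in path_edges x p ->
  connect (edge_rel F) x a /\ connect (edge_rel F) b (last x p).
Proof.
elim: p x => [|y p IH] x //= /andP [Hxy Hp].
rewrite /path_edges /= in_cons => /orP [/eqP [-> ->]|/(IH _ Hp) [Hya Hbl]].
  by split; [exact: connect0 | apply/connectP; exists p].
by split=> //; apply: connect_trans (connect1 Hxy) Hya.
Qed.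

Lemma connect_avoid F a b x y :
  connect (edge_rel F) x y ->
  ~ (connect (edge_rel F) x a /\ connect (edge_rel F) b y) ->
  connect (edge_rel (F :\ (a, b))) x y.
Proof.
move=> /connectP [p Hp ->] Hnot; apply/connectP; exists p => //.
have off_p : (a, b) \notin path_edges x p.
  by apply/negP => on_p; apply: Hnot (path_through_edge Hp on_p).
exact: path_avoid Hp off_p.
Qed.

Lemma redundant_edge F a b :
  reach (F :\ (a, b)) a b -> same_reach (F :\ (a, b)) F.
Proof.
move=> Hab; set F' := F :\ (a, b).
have connect_F' x y : connect (edge_rel F) x y -> connect (edge_rel F') x y.
  apply: connect_sub => {}x {}y Hxy.
  have [[-> ->]|ne] := eqVneq (x, y) (a, b); first by apply/connect_reach; right.
  by apply: connect1; rewrite /edge_rel in_setD1 ne.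
move=> x y; split; first by apply: reach_subset; apply: subsetDl.
move=> /reach_connect [z Hxz Hzy].
have [[-> ez]|ne] := eqVneq (x, z) (a, b).
  by apply: reach_connect_trans Hab (connect_F' _ _ _); rewrite -ez.
by apply/reach_connect; exists z; [rewrite in_setD1 ne | apply: connect_F'].
Qed.

Lemma MEG_edge_irredundant E E' u v :
  is_MEG E E' -> (u, v) \in E' -> ~ reach (E' :\ (u, v)) u v.
Proof.
move=> [sub sr minE'] Huv Hr.
have sr' : same_reach (E' :\ (u, v)) E := fun x y =>
  iff_trans (redundant_edge Hr x y) (sr x y).
have := minE' _ (subset_trans (subsetDl _ _) sub) sr'.
by rewrite (cardsD1 (u, v) E') Huv add1n ltnn.
Qed.

Section AcyclicMEG.
Variables E E' : {set V * V}.
Hypothesis acyc : acyclic E.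
Hypothesis meg : is_MEG E E'.

Lemma MEG_edge_no_detour u v w :
  (u, v) \in E' -> (u, w) \in E -> connect (edge_rel E) w v -> w = v.
Proof.
move=> Huv Huw Hwv; have [subE sr _] := meg.
apply/eqP/negPn/negP => ne_wv.
have toE' x y := @same_reach_connect _ E E' x y (fun a b => iff_sym (sr a b)).
have toE x y := @same_reach_connect _ E' E x y sr.
(* Neither half of the detour can use (u,v) without closing a cycle. *)
have Huw' : connect (edge_rel (E' :\ (u, v))) u w.
  apply: connect_avoid (toE' _ _ (connect1 Huw)) _ => -[_ /toE Hvw].
  have /connect_reach [ev|Rvw] := Hvw; first by rewrite ev eqxx in ne_wv.
  exact: acyc (reach_connect_trans Rvw Hwv).
have Hwv' : connect (edge_rel (E' :\ (u, v))) w v.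
  apply: connect_avoid (toE' _ _ Hwv) _ => -[/toE Hwu _].
  exact: acyc (reach_connect_trans (reach_edge Huw) Hwu).
have Ruv : reach (E' :\ (u, v)) u v.
  have /connect_reach [euv|//] := connect_trans Huw' Hwv'.
  by rewrite euv in Huv; case: (acyc (reach_edge (subsetP subE _ Huv))).
exact: MEG_edge_irredundant meg Huv Ruv.
Qed.

Lemma MEG_edge_only_path u v p :
  (u, v) \in E' -> is_path E u v p -> p = [:: v].
Proof.
move=> Huv; case: p => [|w p]; first by case/and3P.
case/and3P=> _ /= /andP [Huw Hp] /eqP Hl.
have ewv : w = v.
  by apply: MEG_edge_no_detour Huv Huw _; apply/connectP; exists p.
subst w; case: p Hp Hl => [//|a p] Hp Hl.
have cycle_v : reach E v v by exists (a :: p); rewrite /is_path Hp Hl eqxx.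
by case: (acyc cycle_v).
Qed.

End AcyclicMEG.
End MinimumEquivalentGraph.

Section Synchronization.
Variables (V : finType) (S : Type) (f : V -> S) (Lambda : {set V * V}).
Implicit Types (E F : {set V * V}) (x y z : V).

Definition marked E x y : Prop :=
  exists p, is_path E x y p /\ has (fun e => e \in Lambda) (path_edges x p).

(* The condition that safety imposes on each edge (x,y). *)
Definition synchronized E x y : Prop := f x = f y \/ marked E x y.

Lemma marked_connect_l E x y z :
  connect (edge_rel E) x y -> marked E y z -> marked E x z.
Proof.
move=> /connectP [p Hp ->] [q [/and3P [q_nil Hq /eqP q_last] q_has]].
exists (p ++ q); split; last by rewrite path_edges_cat has_cat q_has orbT.
rewrite /is_path cat_path Hp Hq last_cat q_last eqxx andbT.
by case: p Hp Hq q_last q_has => /= *; rewrite ?andbT.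
Qed.

Lemma marked_connect_r E x y z :
  marked E x y -> connect (edge_rel E) y z -> marked E x z.
Proof.
move=> [q [/and3P [q_nil Hq /eqP q_last] q_has]] /connectP [p Hp ->].
exists (q ++ p); split; last by rewrite path_edges_cat has_cat q_has.
rewrite /is_path cat_path Hq q_last Hp last_cat q_last eqxx andbT.
by case: q q_nil Hq q_last q_has => /= *; rewrite ?andbT.
Qed.

Lemma synchronized_subset E F x y :
  E \subset F -> synchronized E x y -> synchronized F x y.
Proof.
move=> sEF [eq|[p [Hp Hh]]]; [by left | right].
by exists p; split=> //; apply: is_path_subset Hp.
Qed.

Lemma synchronized_trans E x y z :
  connect (edge_rel E) x y -> connect (edge_rel E) y z ->
  synchronized E x y -> synchronized E y z -> synchronized E x z.
Proof.
move=> Hxy Hyz [fxy|Mxy] [fyz|Myz].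
- by left; rewrite fxy.
- by right; apply: marked_connect_l Hxy Myz.
- by right; apply: marked_connect_r Mxy Hyz.
- by right; apply: marked_connect_r Mxy Hyz.
Qed.

Lemma safe_connect F x y :
  safe F f Lambda -> connect (edge_rel F) x y -> synchronized F x y.
Proof.
move=> safeF /connectP [p Hp ->]; elim: p x Hp => [|y' p IH] x /=; first by left.
move=> /andP [Hxy Hp]; apply: synchronized_trans (connect1 Hxy) _ _ (IH _ Hp).
- by apply/connectP; exists p.
- exact: safeF.
Qed.

End Synchronization.

Theorem lemma2 (V : finType) (E E' : {set V * V}) (S : Type) (f : V -> S)
    (Lambda : {set V * V}) :
  acyclic E -> is_MEG E E' -> Lambda \subset E ->
  (safe E f Lambda <-> safe E' f Lambda).
Proof.
move=> acyc meg _; have [subE sr _] := meg.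
split=> safeH u v Huv.
- (* the marked E-path of an MEG edge is that edge, also a path of E' *)
  case: (safeH u v (subsetP subE _ Huv)) => [fuv|[p [Hp Hh]]]; [by left | right].
  rewrite (MEG_edge_only_path acyc meg Huv Hp) in Hh *.
  by exists [:: v]; rewrite /is_path /= Huv eqxx.
- (* an E-edge is an E'-path, along which safety on E' propagates *)
  apply: (synchronized_subset subE); apply: (safe_connect safeH).
  by apply/connect_reach; right; apply/sr/reach_edge.
Qed.
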